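(* Under the setting of the context (with $\lambda>0$, $\delta>0$), let $(x_t)_{t\ge0}$ be generated by RGD with step sizes chosen either by line minimization or by Armijo backtracking. Then: (i) every accumulation point $x_*$ of $(x_t)$ is a stationary point, i.e. $\operatorname{grad} f(x_* )=0$; (ii) there is a constant $\bar C>0$ such that for every $\epsilon>0$, there is an index $t\le \lceil (f(x_0)-f_{\inf})/(\bar C\epsilon^2)\rceil$ with $\|\operatorname{grad} f(x_t)\|_{x_t}\le\epsilon$, where $f_{\inf}=\inf_{\mathcal{M}}f$.
   Context: Fix integers $k\ge 2$, $R\ge 1$, $m_1,\dots,m_k\ge1$. Let $\mathcal{M}=\mathbb{R}^{m_1\times R}\times\cdots\times\mathbb{R}^{m_k\times R}$, with points $U=(U^{(1)},\dots,U^{(k)})$; its tangent space at every point is $\mathcal{M}$ itself. For $U\in\mathcal{M}$, let $[\![U^{(1)},\dots,U^{(k)}]\!]:=\sum_{r=1}^R U^{(1)}_{:,r}\circ\cdots\circ U^{(k)}_{:,r}\in\mathbb{R}^{m_1\times\cdots\times m_k}$ (sum of outer products of corresponding columns). Let $\mathcal{T}^\star\in\mathbb{R}^{m_1\times\cdots\times m_k}$, let $\Omega\subseteq [m_1]\times\cdots\times[m_k]$ be nonempty, $p=|\Omega|/(m_1\cdots m_k)$, and $P_\Omega$ the operator keeping entries indexed by $\Omega$ and zeroing the others. Let $\lambda>0$ and $$f(U)=\frac{1}{2p}\|P_\Omega([\![U^{(1)},\dots,U^{(k)}]\!]-\mathcal{T}^\star)\|_F^2+\frac{\lambda}{2}\sum_{i=1}^k\|U^{(i)}\|_F^2.$$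 For $i=1,\dots,k$, let $K_i(U)=U^{(k)}\odot\cdots\odot U^{(i+1)}\odot U^{(i-1)}\odot\cdots\odot U^{(1)}$ (Khatri–Rao product, i.e. columnwise Kronecker product), and for fixed $\delta>0$ let $H_i(U)=K_i(U)^TK_i(U)+\delta I_R$. The Riemannian metric on $\mathcal{M}$ is $g_U(\xi,\eta)=\sum_{i=1}^k\operatorname{tr}(\xi^{(i)}H_i(U)(\eta^{(i)})^T)$, with norm $\|\xi\|_U=\sqrt{g_U(\xi,\xi)}$. The Riemannian gradient is $\operatorname{grad} f(U)=(\partial_{U^{(1)}}f(U)H_1(U)^{-1},\dots,\partial_{U^{(k)}}f(U)H_k(U)^{-1})$, where $\partial_{U^{(i)}}f$ is the ordinary partial (Euclidean) gradient. RGD: given $x_0\in\mathcal{M}$, set $\eta_t=-\operatorname{grad} f(x_t)$ and $x_{t+1}=x_t+s_t\eta_t$. Step-size rules: (line minimization) $s_t\in\arg\min_{s>0} f(x_t+s\eta_t)$; (Armijo backtracking) with fixed $\sigma,\beta\in(0,1)$ and $s_{\min}>0$, a trial step $s_t^0>0$ is set ($s_t^0=1$ for $t\le1$, and $s_t^0=2(f(x_{t-1})-f(x_{t-2}))/g_{x_{t-1}}(\eta_{t-1},\operatorname{grad} f(x_{t-1}))$ for $t\ge2$), and $s_t=\max(s_t^0\beta^\ell,s_{\min})$ where $\ell\ge0$ is the smallest integer (assumed to exist) such that $f(x_t)-f(x_t+s_t\eta_t)\ge\sigma s_t\, g_{x_t}(-\operatorname{grad} f(x_t),\eta_t)$. 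*)

From HB Require Import structures.
From mathcomp Require Import all_boot all_order all_algebra.
From mathcomp Require Import all_classical all_reals all_analysis.
Set Implicit Arguments. Unset Strict Implicit. Unset Printing Implicit Defensive.
Import Order.TTheory GRing.Theory Num.Theory.
Local Open Scope ring_scope.

Section CPD.
Variables (R : realType) (k : nat) (m : 'I_k -> nat) (Rk : nat).

(* A Upoint U = (U^(1),...,U^(k)) of M (also a tangent vector). *)
Definition Upoint := forall i : 'I_k, 'M[R]_(m i, Rk).

Definition tindex := @fprod 'I_k (fun i => 'I_(m i)).
Definition tensor := tindex -> R.

(* [[U^(1),...,U^(k)]] : sum over r of outer products of the r-th columns *)
Definition cp_tensor (U : Upoint) : tensor :=
  fun j => \sum_(r < Rk) \prod_(i < k) U i (j i) r.

Definition P_Omega (Omega : {set tindex}) (T : tensor) : tensor :=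
  fun j => if j \in Omega then T j else 0.

Definition frob2_tensor (T : tensor) : R := \sum_(j : tindex) T j ^+ 2.
Definition frob2 p q (A : 'M[R]_(p, q)) : R := \sum_(a < p) \sum_(b < q) A a b ^+ 2.

Definition sampling_ratio (Omega : {set tindex}) : R :=
  #|Omega|%:R / (\prod_(i < k) m i)%:R.

Definition fobj (Tstar : tensor) (Omega : {set tindex}) (lam : R) (U : Upoint) : R :=
  (2 * sampling_ratio Omega)^-1 *
    frob2_tensor (P_Omega Omega (fun j => cp_tensor U j - Tstar j))
  + lam / 2 * \sum_(i < k) frob2 (U i).

(* Khatri-Rao product K_i(U) = U^(k) . ... . U^(i+1) . U^(i-1) . ... . U^(1):
   its rows are indexed by the multi-indices (j_l)_{l <> i}, its r-th column is
   the Kronecker product of the r-th columns of the U^(l), l <> i. *)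
Definition kr_index (i : 'I_k) := @fprod {l : 'I_k | l != i} (fun l => 'I_(m (val l))).

Definition khatri_rao (U : Upoint) (i : 'I_k) : 'M[R]_(#|kr_index i|, Rk) :=
  \matrix_(a, r) \prod_(l : {l : 'I_k | l != i}) U (val l) ((enum_val a : kr_index i) l) r.

Definition Hmat (delta : R) (U : Upoint) (i : 'I_k) : 'M[R]_Rk :=
  (khatri_rao U i)^T *m khatri_rao U i + delta%:M.

Definition shift_entry (U : Upoint) (i : 'I_k) (a : 'I_(m i)) (b : 'I_Rk) (t : R) : Upoint :=
  fun j => U j + t *: \matrix_(c, d) ((j == i) && (c == a :> nat) && (d == b))%:R.

Definition egrad (F : Upoint -> R) (U : Upoint) (i : 'I_k) : 'M[R]_(m i, Rk) :=
  \matrix_(a, b) (derive1 (fun t => F (shift_entry U a b t)) 0).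

Definition rgrad (delta : R) (F : Upoint -> R) (U : Upoint) : Upoint :=
  fun i => egrad F U i *m invmx (Hmat delta U i).

Definition rmetric (delta : R) (U xi eta : Upoint) : R :=
  \sum_(i < k) \tr (xi i *m Hmat delta U i *m (eta i)^T).

Definition rnorm (delta : R) (U xi : Upoint) : R := Num.sqrt (rmetric delta U xi xi).

Definition padd (x : Upoint) (s : R) (eta : Upoint) : Upoint := fun i => x i + s *: eta i.
Definition popp (x : Upoint) : Upoint := fun i => - x i.

Definition rgd_dir (delta : R) (F : Upoint -> R) (x : nat -> Upoint) (t : nat) : Upoint :=
  popp (rgrad delta F (x t)).

Definition rgd_iter (delta : R) (F : Upoint -> R) (x : nat -> Upoint) (s : nat -> R) :=
  forall t, x t.+1 = padd (x t) (s t) (rgd_dir delta F x t).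

Definition line_min_steps (delta : R) (F : Upoint -> R) (x : nat -> Upoint) (s : nat -> R) :=
  forall t, 0 < s t /\
    forall s', 0 < s' -> F (padd (x t) (s t) (rgd_dir delta F x t))
                         <= F (padd (x t) s' (rgd_dir delta F x t)).

Definition trial_step (delta : R) (F : Upoint -> R) (x : nat -> Upoint) (t : nat) : R :=
  if (t <= 1)%N then 1
  else 2 * (F (x t.-1) - F (x t.-2)) /
       rmetric delta (x t.-1) (rgd_dir delta F x t.-1) (rgrad delta F (x t.-1)).

Definition armijo_cond (delta sigma : R) (F : Upoint -> R) (x : nat -> Upoint) (t : nat) (st : R) :=
  sigma * st * rmetric delta (x t) (popp (rgrad delta F (x t))) (rgd_dir delta F x t)
    <= F (x t) - F (padd (x t) st (rgd_dir delta F x t)).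

Definition armijo_steps (delta sigma beta smin : R) (F : Upoint -> R)
    (x : nat -> Upoint) (s : nat -> R) :=
  forall t,
    exists l : nat,
      [/\ s t = Num.max (trial_step delta F x t * beta ^+ l) smin,
          armijo_cond delta sigma F x t (s t) &
          forall l' : nat, (l' < l)%N ->
            ~ armijo_cond delta sigma F x t
                (Num.max (trial_step delta F x t * beta ^+ l') smin)].

Definition accumulation_point (x : nat -> Upoint) (y : Upoint) :=
  forall eps : R, 0 < eps -> forall N : nat, exists2 t : nat, (N <= t)%N &
    forall i a b, `| x t i a b - y i a b | < eps.

Definition finf (F : Upoint -> R) : R := inf [set F U | U in [set: Upoint]].

End CPD.

(* The objective f is a polynomial in the coordinates of U.  Independently, an abstract lemma about real
   sequences shows that a sufficient-decrease inequality
   C * G t <= a t - a (t+1) with a bounded below forces G t -> 0 and produces a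
   first small index within the claimed budget.  For the CP objective, the
   regulariser makes sublevel sets bounded, the metric dominates delta times the
   Euclidean norm, and the Taylor bound yields a uniform step alpha with
   f(U - alpha grad f(U)) <= f(U) - alpha/2 ||grad f(U)||^2 on the sublevel set
   of f(x_0).  Both step-size rules then give sufficient decrease, and the main
   theorem follows from the abstract sequence lemmas plus the continuity of the
   Euclidean gradient near a non-stationary point. *)

From HB Require Import structures.
From mathcomp Require Import all_boot all_order all_algebra.
From mathcomp Require Import all_classical all_reals all_analysis.
From mathcomp Require Import ring lra.
Set Implicit Arguments. Unset Strict Implicit. Unset Printing Implicit Defensive.
Import Order.TTheory GRing.Theory Num.Theory.
Local Open Scope ring_scope.

Lemma ler_sum_term (R : numDomainType) (I : finType) (F : I -> R) j :
  (forall i, 0 <= F i) -> F j <= \sum_i F i.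
Proof. by move=> h; rewrite (bigD1 j) //= lerDl sumr_ge0. Qed.
Arguments ler_sum_term [R I] F j.

Section PolynomialExpressions.
Variables (R : realType) (V : Type).

Inductive pexpr : Type :=
  PVar of V | PCst of R | PAdd of pexpr & pexpr | PMul of pexpr & pexpr.

Fixpoint peval (env : V -> R) (e : pexpr) : R :=
  match e with
  | PVar v => env v
  | PCst c => c
  | PAdd a b => peval env a + peval env b
  | PMul a b => peval env a * peval env b
  end.

Fixpoint pderiv (dir : V -> R) (e : pexpr) : pexpr :=
  match e with
  | PVar v => PCst (dir v)
  | PCst _ => PCst 0
  | PAdd a b => PAdd (pderiv dir a) (pderiv dir b)
  | PMul a b => PAdd (PMul a (pderiv dir b)) (PMul (pderiv dir a) b)
  end.

(* On the box |env v| <= M: a bound on the value of e, a Lipschitz constant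
   of e, and a constant for its second-order Taylor remainder. *)
Fixpoint val_bound (M : R) (e : pexpr) : R :=
  match e with
  | PVar _ => M
  | PCst c => `|c|
  | PAdd a b => val_bound M a + val_bound M b
  | PMul a b => val_bound M a * val_bound M b
  end.

Fixpoint lip_bound (M : R) (e : pexpr) : R :=
  match e with
  | PVar _ => 1
  | PCst _ => 0
  | PAdd a b => lip_bound M a + lip_bound M b
  | PMul a b => val_bound M a * lip_bound M b + lip_bound M a * val_bound M b
  end.

Fixpoint rem_bound (M : R) (e : pexpr) : R :=
  match e with
  | PVar _ => 0
  | PCst _ => 0
  | PAdd a b => rem_bound M a + rem_bound M b
  | PMul a b => lip_bound M a * lip_bound M b + val_bound M a * rem_bound M b
                + rem_bound M a * val_bound M b
  end.

Variable M : R.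
Hypothesis M_ge0 : 0 <= M.

Lemma val_bound_ge0 e : 0 <= val_bound M e.
Proof. by elim: e => /= [v|c|a ha b hb|a ha b hb] //; rewrite ?addr_ge0 ?mulr_ge0. Qed.

Lemma lip_bound_ge0 e : 0 <= lip_bound M e.
Proof.
elim: e => /= [v|c|a ha b hb|a ha b hb] //; first by rewrite addr_ge0.
by rewrite addr_ge0 // mulr_ge0 // val_bound_ge0.
Qed.

Lemma rem_bound_ge0 e : 0 <= rem_bound M e.
Proof.
elim: e => /= [v|c|a ha b hb|a ha b hb] //; first by rewrite addr_ge0.
by rewrite !addr_ge0 // mulr_ge0 // ?val_bound_ge0 ?lip_bound_ge0.
Qed.

Lemma eval_bound env e : (forall v, `|env v| <= M) -> `|peval env e| <= val_bound M e.
Proof.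
move=> hbox; elim: e => /= [v|c|a ha b hb|a ha b hb] //.
  by rewrite (le_trans (ler_normD _ _)) // lerD.
by rewrite normrM ler_pM.
Qed.

Lemma pderiv_bound env (dir : V -> R) D e :
  (forall v, `|env v| <= M) -> (forall v, `|dir v| <= D) ->
  `|peval env (pderiv dir e)| <= lip_bound M e * D.
Proof.
move=> hbox hdir; elim: e => /= [v|c|a ha b hb|a ha b hb].
- by rewrite mul1r.
- by rewrite normr0 mul0r.
- by rewrite [X in _ <= X]mulrDl (le_trans (ler_normD _ _)) // lerD.
- apply: (le_trans (ler_normD _ _)); rewrite [X in _ <= X]mulrDl lerD //.
    by rewrite -mulrA normrM ler_pM // eval_bound.
  by rewrite mulrAC normrM ler_pM // eval_bound.
Qed.

Section Increment.
Variables (env env' : V -> R) (D : R).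
Hypotheses (env_box : forall v, `|env v| <= M) (env'_box : forall v, `|env' v| <= M).
Hypothesis env_close : forall v, `|env' v - env v| <= D.

Lemma eval_lip e : `|peval env' e - peval env e| <= lip_bound M e * D.
Proof.
elim: e => /= [v|c|a ha b hb|a ha b hb].
- by rewrite mul1r.
- by rewrite subrr normr0 mul0r.
- by rewrite opprD addrACA [X in _ <= X]mulrDl (le_trans (ler_normD _ _)) // lerD.
- have -> : peval env' a * peval env' b - peval env a * peval env b =
    peval env' a * (peval env' b - peval env b) + (peval env' a - peval env a) * peval env b
    by ring.
  apply: (le_trans (ler_normD _ _)); rewrite [X in _ <= X]mulrDl lerD //.
    by rewrite -mulrA normrM ler_pM // eval_bound.
  by rewrite mulrAC normrM ler_pM // eval_bound.
Qed.

Lemma eval_taylor e : 0 <= D ->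
  `|peval env' e - peval env e - peval env (pderiv (fun v => env' v - env v) e)|
    <= rem_bound M e * D ^+ 2.
Proof.
move=> hD; elim: e => /= [v|c|a ha b hb|a ha b hb].
- by rewrite subrr normr0 mul0r.
- by rewrite !subrr normr0 mul0r.
- set la := peval env (pderiv _ a); set lb := peval env (pderiv _ b).
  have -> : peval env' a + peval env' b - (peval env a + peval env b) - (la + lb) =
     (peval env' a - peval env a - la) + (peval env' b - peval env b - lb) by ring.
  by rewrite [X in _ <= X]mulrDl (le_trans (ler_normD _ _)) // lerD.
- set la := peval env (pderiv _ a); set lb := peval env (pderiv _ b).
  have -> : peval env' a * peval env' b - peval env a * peval env b -
     (peval env a * lb + la * peval env b) =
     (peval env' a - peval env a) * lb + peval env' a * (peval env' b - peval env b - lb)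
     + (peval env' a - peval env a - la) * peval env b by ring.
  rewrite [X in _ <= X]mulrDl [X in _ <= X + _]mulrDl.
  apply: (le_trans (ler_normD _ _)); rewrite lerD //.
    apply: (le_trans (ler_normD _ _)); rewrite lerD //.
      by rewrite normrM expr2 mulrACA ler_pM // ?eval_lip // pderiv_bound.
    by rewrite normrM -mulrA ler_pM // eval_bound.
  by rewrite normrM mulrAC ler_pM // eval_bound.
Qed.

End Increment.

Lemma eval_ext env1 env2 e : env1 =1 env2 -> peval env1 e = peval env2 e.
Proof. by move=> h; elim: e => /= [v|c|a ha b hb|a ha b hb]; rewrite ?ha ?hb. Qed.

Lemma pderiv_ext env d1 d2 e : d1 =1 d2 -> peval env (pderiv d1 e) = peval env (pderiv d2 e).
Proof. by move=> h; elim: e => /= [v|c|a ha b hb|a ha b hb]; rewrite ?ha ?hb. Qed.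

Lemma pderiv_scale env (c : R) d e :
  peval env (pderiv (fun v => c * d v) e) = c * peval env (pderiv d e).
Proof. by elim: e => /= [v|c'|a ha b hb|a ha b hb]; rewrite ?ha ?hb; ring. Qed.

Lemma pderiv_sum env (I : Type) (s : seq I) (D : I -> V -> R) e :
  peval env (pderiv (fun v => \sum_(j <- s) D j v) e) = \sum_(j <- s) peval env (pderiv (D j) e).
Proof.
elim: s => [|j s ih].
  rewrite big_nil (pderiv_ext _ (d2 := fun => 0)) => [|v]; last by rewrite big_nil.
  by elim: e => /= [v|c|a ha b hb|a ha b hb]; rewrite ?ha ?hb; ring.
rewrite big_cons -ih {ih} (pderiv_ext _ (d2 := fun v => D j v + \sum_(j <- s) D j v)).
  by elim: e => /= [v|c|a ha b hb|a ha b hb]; rewrite ?ha ?hb; ring.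
by move=> v; rewrite big_cons.
Qed.

Lemma eval_is_derive env dir e (t : R) :
  is_derive t (1 : R) (fun s => peval (fun v => env v + s * dir v) e)
    (peval (fun v => env v + t * dir v) (pderiv dir e)).
Proof.
elim: e => /= [u|c|a ha b hb|a ha b hb].
- have h1 : is_derive t (1 : R) (fun s : R => s * dir u) (dir u).
    have := is_deriveM (@is_derive_id _ _ t (1 : R)) (is_derive_cst (dir u) t (1 : R)).
    by rewrite scaler0 add0r /= scaler1.
  by have := is_deriveD (is_derive_cst (env u) t (1 : R)) h1; rewrite add0r.
- exact: is_derive_cst.
- exact: is_deriveD ha hb.
- have := is_deriveM ha hb; rewrite /GRing.scale /=.
  by congr (is_derive _ _ _ _); ring.
Qed.

Lemma derive1_eval env dir e :
  derive1 (fun s => peval (fun v => env v + s * dir v) e) 0 = peval env (pderiv dir e).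
Proof.
rewrite derive1E (@derive_val _ _ _ _ _ _ _ (eval_is_derive env dir e 0)).
by apply: eval_ext => v; rewrite mul0r addr0.
Qed.

End PolynomialExpressions.

Section SufficientDecrease.
Variables (R : archiRealFieldType) (a G : nat -> R) (C lb : R).
Hypotheses (C_gt0 : 0 < C) (a_ge_lb : forall t, lb <= a t).
Hypothesis decrease : forall t, C * G t <= a t - a t.+1.

Lemma partial_sums_bounded N : C * \sum_(t < N) G t <= a 0 - lb.
Proof.
suff tel : C * \sum_(t < N) G t <= a 0 - a N by apply: le_trans tel _; rewrite lerB.
elim: N => [|N ih]; first by rewrite big_ord0 mulr0 subrr.
rewrite big_ord_recr /= mulrDr.
have -> : a 0 - a N.+1 = (a 0 - a N) + (a N - a N.+1) by ring.
exact: lerD.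
Qed.

(* Worst-case complexity: some index t <= ceil((a 0 - lb) / (C eps^2)) has
   G t <= eps^2, since otherwise the partial sums would be too large. *)
Lemma first_small_index eps : 0 < eps -> exists t : nat,
  ((t%:R : R) <= (Num.ceil ((a 0 - lb) / (C * eps ^+ 2)))%:~R) /\ G t <= eps ^+ 2.
Proof.
move=> eps_gt0; have ceps_gt0 : 0 < C * eps ^+ 2 by rewrite mulr_gt0 // exprn_gt0.
set z := Num.ceil _; have z_ge0 : 0 <= z.
  by rewrite ceil_ge0 (lt_le_trans (ltrN10 _)) // divr_ge0 ?subr_ge0 // ltW.
set n := `|z|%N; have nz : n%:R = z%:~R :> R by rewrite natr_absz ger0_norm.
apply: contrapT => no_small.
have large : forall t, (t <= n)%N -> eps ^+ 2 < G t.
  move=> t tn; rewrite ltNge; apply/negP => small; apply: no_small.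
  by exists t; rewrite -nz ler_nat.
have sum_large : (n%:R + 1) * eps ^+ 2 <= \sum_(t < n.+1) G t.
  have -> : (n%:R + 1) * eps ^+ 2 = \sum_(t < n.+1) eps ^+ 2.
    by rewrite sumr_const card_ord mulrSr mulrDl mul1r mulr_natl.
  by apply: ler_sum => t _; rewrite ltW // large // -ltnS.
have := partial_sums_bounded n.+1; have := ceil_ge ((a 0 - lb) / (C * eps ^+ 2)).
rewrite -/z -nz ler_pdivrMr // => hz hsum.
have : C * ((n%:R + 1) * eps ^+ 2) <= C * \sum_(t < n.+1) G t by rewrite ler_pM2l.
nra.
Qed.

Hypothesis G_ge0 : forall t, 0 <= G t.

(* Summability forces G t -> 0: eventually G t < e0 for every e0 > 0. *)
Lemma eventually_small e0 : 0 < e0 -> exists N, forall t, (N <= t)%N -> G t < e0.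
Proof.
move=> e0_gt0; apply: contrapT => not_eventually.
have often N : exists2 t, (N <= t)%N & e0 <= G t.
  apply: contrapT => h; apply: not_eventually; exists N => t Nt.
  by rewrite ltNge; apply/negP => le_e0; apply: h; exists t.
have sum_mono N N' : (N <= N')%N -> \sum_(t < N) G t <= \sum_(t < N') G t.
  move=> NN'; rewrite -(subnKC NN'); elim: (N' - N)%N => [|j ih]; first by rewrite addn0.
  by rewrite addnS big_ord_recr /= (le_trans ih) // lerDl.
have grow n : exists N, n%:R * e0 <= \sum_(t < N) G t.
  elim: n => [|n [N hN]]; first by exists 0%N; rewrite mul0r big_ord0.
  have [t Nt e0t] := often N; exists t.+1.
  rewrite big_ord_recr /= -addn1 natrD mulrDl mul1r lerD //.
  exact: le_trans hN (sum_mono _ _ Nt).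
set q := (a 0 - lb) / (C * e0).
have q_ge0 : 0 <= q by rewrite divr_ge0 ?subr_ge0 // ltW // mulr_gt0.
have [N hN] := grow (Num.Def.archi_bound q).
have := archi_boundP q_ge0; rewrite ltr_pdivrMr ?mulr_gt0 // => hq.
have := partial_sums_bounded N.
have : C * ((Num.Def.archi_bound q)%:R * e0) <= C * \sum_(t < N) G t by rewrite ler_pM2l.
move: hq; set A := (Num.Def.archi_bound q)%:R; nra.
Qed.

End SufficientDecrease.

Section CPCompletion.
Variables (R : realType) (k : nat) (m : 'I_k -> nat) (Rk : nat).

Local Notation point := (Upoint R m Rk).

Definition coord := {i : 'I_k & ('I_(m i) * 'I_Rk)%type}.

Definition coords (U : point) : coord -> R :=
  fun v => U (tag v) (tagged v).1 (tagged v).2.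

Definition in_box (M : R) (U : point) := forall v, `|coords U v| <= M.

Lemma coords_le_sum (U : point) v : `|coords U v| <= \sum_w `|coords U w|.
Proof. by apply: (ler_sum_term (fun w => `|coords U w|)) => w. Qed.

Lemma ler_sum3 (F : forall i : 'I_k, 'I_(m i) -> 'I_Rk -> R) i a b :
  (forall i a b, 0 <= F i a b) -> F i a b <= \sum_i \sum_a \sum_b F i a b.
Proof.
move=> F_ge0.
apply: (le_trans _ (ler_sum_term (fun i => \sum_a \sum_b F i a b) i _)); last first.
  by move=> j; do 2!apply: sumr_ge0 => ? _.
apply: (le_trans _ (ler_sum_term (fun a => \sum_b F i a b) a _)); last first.
  by move=> a'; apply: sumr_ge0.
exact: (ler_sum_term (F i a)).
Qed.
Arguments ler_sum3 : clear implicits.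

Definition polynomial (P : point -> R) :=
  exists e : pexpr R coord, forall U, P U = peval (coords U) e.

Lemma polynomial_cst c : polynomial (fun => c).
Proof. by exists (PCst _ c). Qed.

Lemma polynomial_coord i a b : polynomial (fun U => U i a b).
Proof. by exists (PVar _ (existT _ i (a, b))). Qed.

Lemma polynomial_add P Q : polynomial P -> polynomial Q -> polynomial (fun U => P U + Q U).
Proof. by move=> [e1 h1] [e2 h2]; exists (PAdd e1 e2) => U /=; rewrite h1 h2. Qed.

Lemma polynomial_mul P Q : polynomial P -> polynomial Q -> polynomial (fun U => P U * Q U).
Proof. by move=> [e1 h1] [e2 h2]; exists (PMul e1 e2) => U /=; rewrite h1 h2. Qed.

Lemma polynomial_ext P Q : P =1 Q -> polynomial P -> polynomial Q.
Proof. by move=> h [e he]; exists e => U; rewrite -h. Qed.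

Lemma polynomial_sum (I : Type) (s : seq I) (F : I -> point -> R) :
  (forall j, polynomial (F j)) -> polynomial (fun U => \sum_(j <- s) F j U).
Proof.
move=> h; elim: s => [|j s ih].
  by apply: polynomial_ext (polynomial_cst 0) => U; rewrite big_nil.
by apply: polynomial_ext (polynomial_add (h j) ih) => U; rewrite big_cons.
Qed.

Lemma polynomial_prod (I : Type) (s : seq I) (F : I -> point -> R) :
  (forall j, polynomial (F j)) -> polynomial (fun U => \prod_(j <- s) F j U).
Proof.
move=> h; elim: s => [|j s ih].
  by apply: polynomial_ext (polynomial_cst 1) => U; rewrite big_nil.
by apply: polynomial_ext (polynomial_mul (h j) ih) => U; rewrite big_cons.
Qed.

Lemma polynomial_sqr P : polynomial P -> polynomial (fun U => P U ^+ 2).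
Proof. by move=> hP; apply: polynomial_ext (polynomial_mul hP hP) => U; rewrite expr2. Qed.

Variables (Tstar : tensor R m) (Omega : {set tindex m}) (lam delta : R).

Lemma fobj_polynomial : polynomial (fobj Tstar Omega lam).
Proof.
rewrite /fobj /frob2_tensor /frob2 /P_Omega /cp_tensor.
apply: polynomial_add; apply: polynomial_mul; try apply: polynomial_cst.
  apply: polynomial_sum => j; apply: polynomial_sqr; case: (j \in Omega).
    apply: polynomial_add; last exact: polynomial_cst.
    apply: polynomial_sum => r; apply: polynomial_prod => i; exact: polynomial_coord.
  exact: polynomial_cst.
do 3!apply: polynomial_sum => ?; exact/polynomial_sqr/polynomial_coord.
Qed.

Lemma Hmat_polynomial i r r' : polynomial (fun U => Hmat delta U i r r').
Proof.
have kr_poly c : polynomial (fun U => khatri_rao U i c r * khatri_rao U i c r').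
  apply: polynomial_ext (polynomial_mul (polynomial_prod _ _) (polynomial_prod _ _)).
  - by move=> U; rewrite !mxE.
  - by move=> l; apply: polynomial_coord.
  - by move=> l; apply: polynomial_coord.
apply: polynomial_ext
  (polynomial_add (polynomial_sum _ kr_poly) (polynomial_cst (delta *+ (r == r')))).
by move=> U; rewrite /Hmat !mxE; congr (_ + _); apply: eq_bigr => c _; rewrite !mxE.
Qed.

Definition unit_dir (i : 'I_k) (a : 'I_(m i)) (b : 'I_Rk) : coord -> R :=
  fun v => ((tag v == i) && (val (tagged v).1 == val a) && ((tagged v).2 == b))%:R.

Lemma coords_shift U i a b t v :
  coords (shift_entry U a b t) v = coords U v + t * unit_dir (i:=i) a b v.
Proof. by case: v => j [c d]; rewrite /coords /shift_entry /unit_dir /= !mxE. Qed.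

Lemma coords_padd U s W v : coords (padd U s W) v = coords U v + s * coords W v.
Proof. by case: v => j [c d]; rewrite /coords /padd /= !mxE. Qed.

Lemma coords_popp W v : coords (popp W) v = - coords W v.
Proof. by case: v => j [c d]; rewrite /coords /popp /= mxE. Qed.

Lemma coords_decomp (W : point) v :
  coords W v = \sum_i \sum_(a < m i) \sum_(b < Rk) W i a b * unit_dir (i:=i) a b v.
Proof.
case: v => j [c d]; rewrite /coords /unit_dir /=.
rewrite (bigD1 j) //= [X in _ + X]big1 ?addr0; last first.
  move=> i hij; apply: big1 => a _; apply: big1 => b _.
  by rewrite eq_sym (negbTE hij) mulr0.
rewrite (bigD1 c) //= [X in _ + X]big1 ?addr0; last first.
  move=> a hac; apply: big1 => b _.
  have -> : (val c == val a) = false by apply/negbTE; rewrite eq_sym.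
  by rewrite eqxx /= mulr0.
rewrite (bigD1 d) //= [X in _ + X]big1 ?addr0; last first.
  by move=> b hbd; rewrite !eqxx /= eq_sym (negbTE hbd) mulr0.
by rewrite !eqxx mulr1.
Qed.

Section PolynomialGradient.
Variables (F : point -> R) (E : pexpr R coord).
Hypothesis F_eval : forall U, F U = peval (coords U) E.

Lemma egrad_eval U i a b :
  egrad F U i a b = peval (coords U) (pderiv (unit_dir (i:=i) a b) E).
Proof.
rewrite /egrad mxE -derive1_eval; congr (derive1 _ 0); apply: funext => t.
by rewrite F_eval; apply: eval_ext => v; rewrite coords_shift.
Qed.

Lemma pderiv_pairing U W :
  peval (coords U) (pderiv (coords W) E) =
  \sum_i \sum_(a < m i) \sum_(b < Rk) W i a b * egrad F U i a b.
Proof.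
rewrite (pderiv_ext _ _ (coords_decomp W)) pderiv_sum; apply: eq_bigr => i _.
rewrite pderiv_sum; apply: eq_bigr => a _; rewrite pderiv_sum; apply: eq_bigr => b _.
by rewrite pderiv_scale egrad_eval.
Qed.

Variable M : R.
Hypothesis M_ge0 : 0 <= M.

Lemma egrad_l1_bounded : exists2 B : R, 0 <= B & forall U, in_box M U ->
  \sum_i \sum_(a < m i) \sum_(b < Rk) `|egrad F U i a b| <= B.
Proof.
exists (\sum_i \sum_(a < m i) \sum_(b < Rk) val_bound M (pderiv (unit_dir (i:=i) a b) E)).
  by do 3!apply: sumr_ge0 => ? _; exact: val_bound_ge0.
move=> U U_box; do 3!apply: ler_sum => ? _.
by rewrite egrad_eval; exact: eval_bound.
Qed.

Lemma egrad_lipschitz i a b : exists2 L : R, 0 <= L & forall U U' d,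
  in_box M U -> in_box M U' -> (forall v, `|coords U' v - coords U v| <= d) ->
  `|egrad F U' i a b - egrad F U i a b| <= L * d.
Proof.
exists (lip_bound M (pderiv (unit_dir (i:=i) a b) E)); first exact: lip_bound_ge0.
by move=> U U' d U_box U'_box close; rewrite !egrad_eval; exact: eval_lip.
Qed.

Lemma taylor_bound : exists2 Rr : R, 0 <= Rr & forall U s W D, 0 <= D ->
  in_box M U -> in_box M (padd U s W) -> (forall v, `|s * coords W v| <= D) ->
  `|F (padd U s W) - F U - s * \sum_i \sum_(a < m i) \sum_(b < Rk) W i a b * egrad F U i a b|
    <= Rr * D ^+ 2.
Proof.
exists (rem_bound M E); first exact: rem_bound_ge0.
move=> U s W D D_ge0 U_box V_box step.
have close v : `|coords (padd U s W) v - coords U v| <= D.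
  by rewrite coords_padd addrAC subrr add0r.
have := eval_taylor U_box V_box close E D_ge0.
rewrite -!F_eval (pderiv_ext _ _ (d2 := fun v => s * coords W v)); last first.
  by move=> v; rewrite coords_padd addrAC subrr add0r.
by rewrite pderiv_scale pderiv_pairing.
Qed.

End PolynomialGradient.

Lemma tr_mul_trmx p q (A B : 'M[R]_(p, q)) : \tr (A *m B^T) = \sum_a \sum_b A a b * B a b.
Proof.
by rewrite /mxtrace; apply: eq_bigr => a _; rewrite !mxE; apply: eq_bigr => b _; rewrite mxE.
Qed.

Lemma norm_le_1Dsqr (x : R) : `|x| <= 1 + x ^+ 2.
Proof.
rewrite -(real_normK (num_real x)); have := sqr_ge0 (`|x| - 1); have := normr_ge0 x.
nra.
Qed.

Lemma sumsq_ge0 p q (A : 'M[R]_(p, q)) : 0 <= \sum_a \sum_b A a b ^+ 2.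
Proof. by do 2!apply: sumr_ge0 => ? _; exact: sqr_ge0. Qed.

Section Metric.
Hypothesis delta_gt0 : 0 < delta.

Lemma Hmat_quad_ge p (U : point) i (g : 'M[R]_(p, Rk)) :
  delta * \sum_a \sum_b g a b ^+ 2 <= \tr (g *m Hmat delta U i *m g^T).
Proof.
rewrite /Hmat mulmxDr mulmxDl mxtraceD mul_mx_scalar -scalemxAl mxtraceZ.
have -> : g *m ((khatri_rao U i)^T *m khatri_rao U i) *m g^T =
   (g *m (khatri_rao U i)^T) *m (g *m (khatri_rao U i)^T)^T by rewrite trmx_mul trmxK !mulmxA.
rewrite !tr_mul_trmx addrC lerDl.
under eq_bigr => a _ do under eq_bigr => b _ do rewrite -expr2.
by rewrite sumsq_ge0.
Qed.

Lemma Hmat_unit (U : point) i : Hmat delta U i \in unitmx.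
Proof.
rewrite unitmxE unitfE; apply/negP => /det0P [v v_neq0 Hv].
have := Hmat_quad_ge U i v; rewrite Hv mul0mx mxtrace0 => quad.
have sum0 : \sum_a \sum_b v a b ^+ 2 = 0.
  by apply/le_anti; rewrite sumsq_ge0 andbT -(pmulr_rle0 _ delta_gt0).
move/negP: v_neq0; apply; apply/eqP/matrixP => a b; rewrite mxE; apply/eqP.
rewrite -sqrf_eq0 eq_le sqr_ge0 andbT -sum0.
apply: (le_trans _ (ler_sum_term (fun a => \sum_b v a b ^+ 2) a _)).
  by apply: (ler_sum_term (fun b => v a b ^+ 2)) => b'; exact: sqr_ge0.
by move=> a'; apply: sumr_ge0 => b' _; exact: sqr_ge0.
Qed.

Lemma rgrad_mulH F (U : point) i : rgrad delta F U i *m Hmat delta U i = egrad F U i.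
Proof. by rewrite /rgrad mulmxKV // Hmat_unit. Qed.

(* ||grad F(U)||_U^2 and the resulting bound on the entries of grad F(U). *)
Definition gradsq F (U : point) := rmetric delta U (rgrad delta F U) (rgrad delta F U).
Definition gradmax F (U : point) := Num.sqrt (gradsq F U / delta).

Lemma gradsq_pairing F U : gradsq F U =
  \sum_i \sum_(a < m i) \sum_(b < Rk) egrad F U i a b * rgrad delta F U i a b.
Proof. by rewrite /gradsq /rmetric; apply: eq_bigr => i _; rewrite rgrad_mulH tr_mul_trmx. Qed.

Lemma gradsq_ge_frob F U :
  delta * \sum_i \sum_(a < m i) \sum_(b < Rk) rgrad delta F U i a b ^+ 2 <= gradsq F U.
Proof. by rewrite /gradsq /rmetric mulr_sumr; apply: ler_sum => i _; exact: Hmat_quad_ge. Qed.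

Lemma gradsq_ge0 F U : 0 <= gradsq F U.
Proof.
apply: le_trans (gradsq_ge_frob F U); apply: mulr_ge0; first exact: ltW.
by apply: sumr_ge0 => i _; exact: sumsq_ge0.
Qed.

Lemma gradmax_ge0 F U : 0 <= gradmax F U.
Proof. exact: sqrtr_ge0. Qed.

Lemma gradmax_sqr F U : gradmax F U ^+ 2 = gradsq F U / delta.
Proof. by rewrite sqr_sqrtr // divr_ge0 ?gradsq_ge0 // ltW. Qed.

Lemma rgrad_le_gradmax F U i a b : `|rgrad delta F U i a b| <= gradmax F U.
Proof.
rewrite -sqrtr_sqr ler_sqrt; last by rewrite divr_ge0 ?gradsq_ge0 // ltW.
have term := ler_sum3 (fun i a b => rgrad delta F U i a b ^+ 2) i a b (fun _ _ _ => sqr_ge0 _).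
rewrite ler_pdivlMr // mulrC; apply: le_trans (gradsq_ge_frob F U).
by rewrite ler_pM2l.
Qed.

Lemma pairing_descent_dir F U :
  \sum_i \sum_(a < m i) \sum_(b < Rk) popp (rgrad delta F U) i a b * egrad F U i a b
  = - gradsq F U.
Proof.
rewrite gradsq_pairing -sumrN; apply: eq_bigr => i _; rewrite -sumrN.
by apply: eq_bigr => a _; rewrite -sumrN; apply: eq_bigr => b _; rewrite /popp mxE mulNr mulrC.
Qed.

Lemma rmetric_popp U (g : point) : rmetric delta U (popp g) (popp g) = rmetric delta U g g.
Proof.
by rewrite /rmetric; apply: eq_bigr => i _; rewrite /popp linearN /= mulmxN mulNmx mulNmx opprK.
Qed.

Lemma Hmat_bounded i (M : R) : exists B : R, forall U, in_box M U ->
  forall r b, `|Hmat delta U i r b| <= B.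
Proof.
have : forall rb : 'I_Rk * 'I_Rk, exists B : R, forall U, in_box M U ->
    `|Hmat delta U i rb.1 rb.2| <= B.
  move=> rb; have [e he] := Hmat_polynomial i rb.1 rb.2.
  by exists (val_bound M e) => U U_box; rewrite he; exact: eval_bound.
case/fin_all_exists => B hB; exists (\sum_rb `|B rb|) => U U_box r b.
apply: le_trans (hB (r, b) U U_box) _; apply: le_trans (ler_norm _) _.
by apply: (ler_sum_term (fun rb => `|B rb|)) => rb.
Qed.

(* Conversely, on a box a Euclidean gradient entry controls the Riemannian
   gradient norm from below, since egrad = rgrad H_i with H_i bounded. *)
Lemma egrad_sqr_le_gradsq F i (M : R) : exists2 K : R, 0 < K &
  forall U, in_box M U -> forall a b, egrad F U i a b ^+ 2 <= K * gradsq F U.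
Proof.
have [B hB] := Hmat_bounded i M; set K0 := Rk%:R * `|B|.
exists ((K0 ^+ 2 + 1) / delta); first by rewrite divr_gt0 // ltr_wpDl ?sqr_ge0.
move=> U U_box a b.
have e_le : `|egrad F U i a b| <= gradmax F U * K0.
  rewrite -rgrad_mulH mxE (le_trans (ler_norm_sum _ _ _)) //.
  have -> : gradmax F U * K0 = \sum_(r < Rk) gradmax F U * `|B|.
    by rewrite sumr_const card_ord /K0 mulrCA mulr_natl.
  apply: ler_sum => r _; rewrite normrM ler_pM ?rgrad_le_gradmax //.
  exact: le_trans (hB U U_box r b) (ler_norm _).
have -> : (K0 ^+ 2 + 1) / delta * gradsq F U = (K0 ^+ 2 + 1) * gradmax F U ^+ 2.
  by rewrite gradmax_sqr mulrAC -mulrA.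
have := gradmax_ge0 F U; have := normr_ge0 (egrad F U i a b).
have : egrad F U i a b ^+ 2 = `|egrad F U i a b| ^+ 2 by rewrite real_normK ?num_real.
move: e_le; set e := egrad F U i a b; set g := gradmax F U.
nra.
Qed.

Lemma gradsq_bounded_below_near F E (F_eval : forall U, F U = peval (coords U) E)
    (y : point) i a b :
  egrad F y i a b != 0 ->
  exists2 d : R, 0 < d & exists2 e0 : R, 0 < e0 & forall U : point,
    (forall i a b, `|U i a b - y i a b| < d) -> e0 <= gradsq F U.
Proof.
move=> e_neq0; set c := `|egrad F y i a b|; have c_gt0 : 0 < c by rewrite normr_gt0.
set My := \sum_w `|coords y w| + 1.
have My_ge0 : 0 <= My by rewrite addr_ge0 // sumr_ge0.
have y_box : in_box My y by move=> v; rewrite (le_trans (coords_le_sum y v)) // lerDl.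
have [L L_ge0 lip] := egrad_lipschitz F_eval My_ge0 a b.
have [K K_gt0 lower] := egrad_sqr_le_gradsq F i My.
have L1_gt0 : 0 < L + 1 by lra.
set d := Num.min 1 (c / (2 * (L + 1))).
have d_gt0 : 0 < d by rewrite lt_min ltr01 divr_gt0 // mulr_gt0.
have d_le1 : d <= 1 by rewrite ge_min lexx.
have Ld : L * d <= c / 2.
  have : (L + 1) * d <= (L + 1) * (c / (2 * (L + 1))) by rewrite ler_wpM2l ?ge_min ?lexx ?orbT ?ltW.
  have -> : (L + 1) * (c / (2 * (L + 1))) = c / 2 by field; rewrite gt_eqF.
  have : L * d = (L + 1) * d - d by ring.
  lra.
exists d => //; exists (c ^+ 2 / (4 * K)); first by rewrite divr_gt0 ?exprn_gt0 ?mulr_gt0.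
move=> U near.
have close v : `|coords U v - coords y v| <= d by case: v => j [a' b']; exact/ltW/near.
have U_box : in_box My U.
  move=> v; have -> : coords U v = coords y v + (coords U v - coords y v) by ring.
  by rewrite (le_trans (ler_normD _ _)) // lerD ?coords_le_sum // (le_trans (close v)).
have e_close := le_trans (lip y U d y_box U_box close) Ld.
have := ler_normB (egrad F U i a b) (egrad F U i a b - egrad F y i a b).
rewrite opprB addrC subrK -/c => e_tri.
have := lower U U_box a b.
have : egrad F U i a b ^+ 2 = `|egrad F U i a b| ^+ 2 by rewrite real_normK ?num_real.
rewrite ler_pdivrMr ?mulr_gt0 //.
move: e_close e_tri; set eU := egrad F U i a b; set G := gradsq F U.
have := normr_ge0 (eU - egrad F y i a b).
nra.
Qed.

Section Objective.
Hypotheses (Omega_gt0 : (0 < #|Omega|)%N) (m_gt0 : forall i, (1 <= m i)%N).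
Hypothesis lam_gt0 : 0 < lam.
Local Notation f := (fobj Tstar Omega lam : point -> R).

Lemma sampling_ratio_gt0 : 0 < sampling_ratio R Omega.
Proof. by rewrite /sampling_ratio divr_gt0 // ltr0n // prodn_gt0. Qed.

Lemma data_fit_ge0 (U : point) : 0 <= (2 * sampling_ratio R Omega)^-1 *
  frob2_tensor (P_Omega Omega (fun j => cp_tensor U j - Tstar j)).
Proof.
rewrite mulr_ge0 //; first by rewrite invr_ge0 mulr_ge0 // ltW // sampling_ratio_gt0.
by apply: sumr_ge0 => j _; exact: sqr_ge0.
Qed.

Lemma f_ge0 U : 0 <= f U.
Proof.
apply: addr_ge0; first exact: data_fit_ge0.
apply: mulr_ge0; first by rewrite divr_ge0 // ltW.
by apply: sumr_ge0 => i _; exact: sumsq_ge0.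
Qed.

Lemma finf_le U : finf f <= f U.
Proof. by apply: ge_inf; [exists 0 => _ [V _ <-]; exact: f_ge0 | exists U]. Qed.

Lemma f_ge_reg (U : point) i (a : 'I_(m i)) (b : 'I_Rk) : lam / 2 * U i a b ^+ 2 <= f U.
Proof.
rewrite /fobj -[X in X <= _]add0r lerD ?data_fit_ge0 // ler_pM2l ?divr_gt0 //.
by apply: (ler_sum3 (fun i a b => U i a b ^+ 2)) => *; exact: sqr_ge0.
Qed.

Lemma sublevel_in_box f0 U : f U <= f0 -> in_box (1 + 2 * f0 / lam) U.
Proof.
move=> fU [i [a b]]; rewrite /coords /=; apply: le_trans (norm_le_1Dsqr _) _.
rewrite lerD2l ler_pdivlMr //; have := le_trans (f_ge_reg U a b) fU; lra.
Qed.

Lemma gradmax_sublevel f0 : 0 <= f0 -> exists2 Gm : R, 0 <= Gm &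
  forall U, f U <= f0 -> gradmax f U <= Gm.
Proof.
move=> f0_ge0; have [E f_eval] := fobj_polynomial.
have M0_ge0 : 0 <= 1 + 2 * f0 / lam by rewrite addr_ge0 // divr_ge0 ?mulr_ge0 // ltW.
have [B B_ge0 egrad_bnd] := egrad_l1_bounded f_eval M0_ge0.
exists (B / delta); first by rewrite divr_ge0 // ltW.
move=> U fU; set g := gradmax f U; have g_ge0 : 0 <= g := gradmax_ge0 f U.
have G_le : gradsq f U <= B * g.
  apply: le_trans (ler_wpM2r g_ge0 (egrad_bnd U (sublevel_in_box fU))).
  rewrite gradsq_pairing mulr_suml; apply: ler_sum => i _; rewrite mulr_suml.
  apply: ler_sum => a _; rewrite mulr_suml; apply: ler_sum => b _.
  by rewrite (le_trans (ler_norm _)) // normrM ler_wpM2l ?rgrad_le_gradmax.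
have G_eq : gradsq f U = delta * g ^+ 2 by rewrite gradmax_sqr mulrC divfK // gt_eqF.
rewrite ler_pdivlMr //; have [->|g_neq0] := eqVneq g 0; first by rewrite mul0r.
have g_gt0 : 0 < g by rewrite lt_neqAle eq_sym g_neq0.
by rewrite -(ler_pM2r g_gt0) mulrAC -expr2 [_ * delta]mulrC -G_eq.
Qed.

(* Sufficient decrease with a uniform step on a sublevel set: the Taylor
   remainder is quadratic in the step, hence dominated for small alpha. *)
Lemma uniform_descent f0 : 0 <= f0 -> exists2 alpha : R, 0 < alpha & forall U,
  f U <= f0 -> f (padd U alpha (popp (rgrad delta f U))) <= f U - alpha / 2 * gradsq f U.
Proof.
move=> f0_ge0; have [E f_eval] := fobj_polynomial.
set M0 := 1 + 2 * f0 / lam.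
have M0_ge0 : 0 <= M0 by rewrite addr_ge0 // divr_ge0 ?mulr_ge0 // ltW.
have [Gm Gm_ge0 grad_bnd] := gradmax_sublevel f0_ge0.
have M1_ge0 : 0 <= M0 + Gm by rewrite addr_ge0.
have [Rr Rr_ge0 taylor] := taylor_bound f_eval M1_ge0.
have den_gt0 : 0 < 2 * Rr + delta by rewrite ltr_wpDl // mulr_ge0.
set alpha := delta / (2 * Rr + delta).
have alpha_gt0 : 0 < alpha by rewrite divr_gt0.
have alpha_le1 : alpha <= 1 by rewrite ler_pdivrMr // mul1r lerDr mulr_ge0.
have alpha_eq : alpha * (2 * Rr + delta) = delta by rewrite divfK // gt_eqF.
exists alpha => // U fU; set W := popp (rgrad delta f U); set g := gradmax f U.
have g_ge0 : 0 <= g := gradmax_ge0 f U.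
have step v : `|alpha * coords W v| <= alpha * g.
  rewrite coords_popp normrM normrN (ger0_norm (ltW alpha_gt0)) ler_pM2l //.
  by case: v => i [a b]; exact: rgrad_le_gradmax.
have U_box : in_box (M0 + Gm) U.
  by move=> v; rewrite (le_trans (sublevel_in_box fU v)) // lerDl.
have V_box : in_box (M0 + Gm) (padd U alpha W).
  move=> v; rewrite coords_padd (le_trans (ler_normD _ _)) // lerD ?sublevel_in_box //.
  by rewrite (le_trans (step v)) // -[Gm]mul1r ler_pM // ?grad_bnd // ltW.
have := taylor U alpha W (alpha * g) (mulr_ge0 (ltW alpha_gt0) g_ge0) U_box V_box step.
rewrite pairing_descent_dir => /(le_trans (ler_norm _)) taylor_step.
have G_eq : g ^+ 2 * delta = gradsq f U by rewrite gradmax_sqr divfK // gt_eqF.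
have slack : alpha * gradsq f U - 2 * (Rr * (alpha * g) ^+ 2) = (alpha * g) ^+ 2 * delta.
  by rewrite -G_eq -[X in alpha * (_ * X) - _ = _]alpha_eq; ring.
have : 0 <= (alpha * g) ^+ 2 * delta by rewrite mulr_ge0 ?sqr_ge0 // ltW.
lra.
Qed.

Section Iterates.
Variables (x : nat -> point) (s : nat -> R).
Hypothesis iterates : rgd_iter delta f x s.

(* Line minimisation does at least as well as the uniform step of
   uniform_descent, which applies since the values f (x t) never increase. *)
Lemma line_min_decrease : line_min_steps delta f x s ->
  exists2 C : R, 0 < C & forall t, C * gradsq f (x t) <= f (x t) - f (x t.+1).
Proof.
move=> line_min; have [alpha alpha_gt0 descent] := uniform_descent (f_ge0 (x 0)).
have step t : f (x t) <= f (x 0) -> f (x t.+1) <= f (x t) - alpha / 2 * gradsq f (x t).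
  move=> sub; rewrite iterates; have [_ best] := line_min t.
  exact: le_trans (best alpha alpha_gt0) (descent _ sub).
have sub t : f (x t) <= f (x 0).
  elim: t => // t ih; apply: le_trans (step t ih) _; apply: le_trans _ ih.
  by rewrite gerBl mulr_ge0 ?divr_ge0 ?gradsq_ge0 // ltW.
exists (alpha / 2); first by rewrite divr_gt0.
by move=> t; rewrite lerBrDl -lerBrDr; exact: step.
Qed.

Lemma armijo_decrease sigma beta smin : 0 < sigma -> 0 < smin ->
  armijo_steps delta sigma beta smin f x s ->
  exists2 C : R, 0 < C & forall t, C * gradsq f (x t) <= f (x t) - f (x t.+1).
Proof.
move=> sigma_gt0 smin_gt0 armijo; exists (sigma * smin); first by rewrite mulr_gt0.
move=> t; have [l [s_eq cond _]] := armijo t.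
move: cond; rewrite /armijo_cond /rgd_dir rmetric_popp -/(rgd_dir delta f x t) -iterates.
apply: le_trans; apply: ler_wpM2r; first exact: gradsq_ge0.
by apply: ler_wpM2l; [exact: ltW | rewrite s_eq le_max lexx orbT].
Qed.

(* Accumulation points are stationary: near a non-stationary point the
   gradient norm is bounded below, while sufficient decrease drives it to 0. *)
Lemma accumulation_stationary C : 0 < C ->
  (forall t, C * gradsq f (x t) <= f (x t) - f (x t.+1)) ->
  forall y, accumulation_point x y -> forall i, rgrad delta f y i = 0.
Proof.
move=> C_gt0 decrease y acc i; apply: contrapT => grad_neq0.
have [a [b e_neq0]] : exists a b, egrad f y i a b != 0.
  apply: contrapT => all_zero; apply: grad_neq0.
  suff egrad0 : egrad f y i = 0 by rewrite /rgrad egrad0 mul0mx.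
  apply/matrixP => a b; rewrite [X in _ = X]mxE; apply: contrapT => e_neq0.
  by apply: all_zero; exists a, b; apply/eqP.
have [E f_eval] := fobj_polynomial.
have [d d_gt0 [e0 e0_gt0 near]] := gradsq_bounded_below_near f_eval e_neq0.
have [N small] := eventually_small C_gt0 (fun t => f_ge0 (x t)) decrease
  (fun t => gradsq_ge0 f (x t)) e0_gt0.
have [t Nt close] := acc d d_gt0 N.
by have := small t Nt; rewrite ltNge near.
Qed.

End Iterates.

End Objective.

End Metric.

End CPCompletion.

Theorem proposition4p3 (R : realType) (k : nat) (m : 'I_k -> nat) (Rk : nat)
    (Tstar : tensor R m) (Omega : {set tindex m}) (lam delta : R)
    (x : nat -> Upoint R m Rk) (s : nat -> R) :
  (2 <= k)%N -> (1 <= Rk)%N -> (forall i, (1 <= m i)%N) ->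
  (0 < #|Omega|)%N -> 0 < lam -> 0 < delta ->
  let f := fobj Tstar Omega lam in
  rgd_iter delta f x s ->
  (line_min_steps delta f x s \/
   exists sigma beta smin : R,
     [/\ 0 < sigma < 1, 0 < beta < 1, 0 < smin &
         armijo_steps delta sigma beta smin f x s]) ->
  (forall y : Upoint R m Rk, accumulation_point x y ->
     forall i, rgrad delta f y i = 0) /\
  (exists2 Cbar : R, 0 < Cbar &
     forall eps : R, 0 < eps ->
       exists t : nat,
         ((t%:R : R) <= (Num.ceil ((f (x 0%N) - finf f) / (Cbar * eps ^+ 2)))%:~R) /\
         rnorm delta (x t) (rgrad delta f (x t)) <= eps).
Proof.
move=> _ _ m_gt0 Omega_gt0 lam_gt0 delta_gt0 f iterates steps.
have [C C_gt0 decrease] : exists2 C : R, 0 < C &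
    forall t, C * gradsq delta f (x t) <= f (x t) - f (x t.+1).
  case: steps => [line_min | [sigma [beta [smin [/andP[sigma_gt0 _] _ smin_gt0 armijo]]]]].
    exact: (line_min_decrease delta_gt0 Omega_gt0 m_gt0 lam_gt0 iterates line_min).
  exact: (armijo_decrease delta_gt0 iterates sigma_gt0 smin_gt0 armijo).
split; first exact: (accumulation_stationary delta_gt0 Omega_gt0 m_gt0 lam_gt0 C_gt0 decrease).
exists C => // eps eps_gt0.
have f_ge_finf t : finf f <= f (x t) := finf_le Tstar Omega_gt0 m_gt0 lam_gt0 (x t).
have [t [t_le small]] := first_small_index C_gt0 f_ge_finf decrease eps_gt0.
exists t; split => //; rewrite /rnorm -(ger0_norm (ltW eps_gt0)) -sqrtr_sqr.
by rewrite ler_sqrt ?sqr_ge0.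
Qed.
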